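(* For every integer $n\ge1$, $|A_n|\le 0.21\,(3/4)^n$ and $|B_n|\le 0.85\,(3/4)^n$.
   Context: Let $x_0=-\tfrac{770766}{323285}$ and let $a_0=-x_0/10$, $a_1=-1/6$, $a_2=\tfrac{19949}{321055}$, $a_3=0$, $a_n=-\tfrac{6}{(n+5)(n-2)}\sum_{k=0}^{n-4}a_ka_{n-4-k}$ for $4\le n\le 17$. Define $A_0=1$, $A_1=A_2=A_3=0$, and $A_n=-\tfrac{12}{n(n+7)}\sum_{k=0}^{\min\{n-4,17\}}a_kA_{n-4-k}$ for $n\ge4$; define $B_0=1$, $B_1=B_2=B_3=B_7=0$, and $B_n=-\tfrac{12}{n(n-7)}\sum_{k=0}^{\min\{n-4,17\}}a_kB_{n-4-k}$ for $n\ge4$, $n\ne7$. *)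

From mathcomp Require Import all_boot all_order all_algebra.
Set Implicit Arguments. Unset Strict Implicit. Unset Printing Implicit Defensive.
Import Order.TTheory GRing.Theory Num.Theory.
Local Open Scope ring_scope.

(* Course-of-values construction: [hist step n] = [:: x_0; ...; x_{n-1}]
   where x_m = step [:: x_0; ...; x_{m-1}] m. *)
Fixpoint hist (step : seq rat -> nat -> rat) (n : nat) : seq rat :=
  match n with
  | 0 => [::]
  | m.+1 => let s := hist step m in rcons s (step s m)
  end.

Definition seq_of (step : seq rat -> nat -> rat) (n : nat) : rat :=
  nth 0 (hist step n.+1) n.

Definition x0 : rat := - (770766%:R / 323285%:R).

Definition a_step (s : seq rat) (n : nat) : rat :=
  match n with
  | 0 => - x0 / 10%:R
  | 1 => - (1 / 6%:R)
  | 2 => 19949%:R / 321055%:R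
  | 3 => 0
  | _ => - (6%:R / ((n%:R + 5%:R) * (n%:R - 2%:R))) *
         \sum_(k < (n - 3)%N) s`_k * s`_(n - 4 - k)
  end.

Definition a (n : nat) : rat := seq_of a_step n.

Definition A_step (s : seq rat) (n : nat) : rat :=
  match n with
  | 0 => 1
  | 1 | 2 | 3 => 0
  | _ => - (12%:R / (n%:R * (n%:R + 7%:R))) *
         \sum_(k < (minn (n - 4) 17).+1) a k * s`_(n - 4 - k)
  end.

Definition A (n : nat) : rat := seq_of A_step n.

Definition B_step (s : seq rat) (n : nat) : rat :=
  match n with
  | 0 => 1
  | 1 | 2 | 3 | 7 => 0
  | _ => - (12%:R / (n%:R * (n%:R - 7%:R))) *
         \sum_(k < (minn (n - 4) 17).+1) a k * s`_(n - 4 - k)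
  end.

Definition B (n : nat) : rat := seq_of B_step n.

(* For n >= 22 the recurrences for A and B involve all of a_0, ..., a_17 and
   only indices n - 4 - k >= 1.  If |X_j| <= C (3/4)^j for 1 <= j < n, then
   |X_n| <= |c_n| C (3/4)^n \sum_(k < 18) |a_k| (4/3)^(k+4); this weighted sum is
   at most 3 and |c_n| = 12/(n(n+7)) or 12/(n(n-7)) is at most 1/3, so the bound
   propagates by strong induction.  The base cases 1 <= n < 22 and the bound 3
   on the weighted sum are exact rational computations: they are evaluated by
   vm_compute in Stdlib's Q (rat's big operators are locked and its nat
   literals unary) and transferred to rat along the field morphism ratQ. *)

From Stdlib Require Import ZArith QArith Qabs.
From mathcomp Require Import all_boot all_order all_algebra.
From mathcomp Require Import zify ssrZ ring.
Import Order.TTheory GRing.Theory Num.Theory.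
Local Open Scope ring_scope.

Section GeometricDecay.

Variables (R : realFieldType) (w c X : nat -> R) (m d N : nat) (r K C : R).
Hypotheses (r_gt0 : 0 < r) (C_ge0 : 0 <= C) (d_gt0 : (0 < d)%N) (window_le : (m + d <= N)%N).
Hypothesis weighted_sum_le : \sum_(k < m) `|w k| / r ^+ (k + d) <= K.
Hypothesis coef_le : forall n, (N <= n)%N -> `|c n| * K <= 1.
Hypothesis X_rec : forall n, (N <= n)%N -> X n = c n * \sum_(k < m) w k * X (n - d - k)%N.
Hypothesis X_small : forall n, (1 <= n < N)%N -> `|X n| <= C * r ^+ n.

Lemma geometric_decay n : (1 <= n)%N -> `|X n| <= C * r ^+ n.
Proof.
elim/ltn_ind: n => n IHn n_ge1; have [n_lt|n_ge] := ltnP n N.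
  by apply: X_small; rewrite n_ge1.
have Crn_ge0 : 0 <= C * r ^+ n by rewrite mulr_ge0 // exprn_ge0 // ltW.
have sum_le : `|\sum_(k < m) w k * X (n - d - k)%N| <= C * r ^+ n * K.
  rewrite (le_trans (ler_norm_sum _ _ _)) // (le_trans _ (ler_wpM2l Crn_ge0 weighted_sum_le)) //.
  rewrite mulr_sumr ler_sum // => k _; rewrite normrM mulrCA ler_wpM2l // -subnDA addnC.
  have kd_lt : (k + d < n)%N by have := ltn_ord k; lia.
  by rewrite -mulrA -(expfB _ kd_lt); apply: IHn; lia.
rewrite X_rec // normrM (le_trans (ler_wpM2l (normr_ge0 _) sum_le)) //.
by rewrite mulrCA ler_piMr // coef_le.
Qed.

End GeometricDecay.

Arguments geometric_decay {R w c X m d N r K C}.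

Lemma recurrence_coef_le (R : realFieldType) (p : R) :
  36%:R <= p -> `|- (12%:R / p)| * 3%:R <= 1.
Proof.
move=> p_ge; have p_gt0 : 0 < p by rewrite (lt_le_trans _ p_ge) ?ltr0n.
have coef_ge0 : 0 <= 12%:R / p by rewrite divr_ge0 // ltW.
by rewrite normrN ger0_norm // mulrAC ler_pdivrMr // mul1r -natrM.
Qed.

Lemma size_hist step n : size (hist step n) = n.
Proof. by elim: n => //= n IHn; rewrite size_rcons IHn. Qed.

Lemma nth_hist step m n : (m < n)%N -> nth 0 (hist step n) m = seq_of step m.
Proof.
elim: n => // n IHn; rewrite ltnS leq_eqVlt => /orP[/eqP -> //|lt_mn].
by rewrite /= nth_rcons size_hist lt_mn IHn.
Qed.

Lemma seq_ofE step n : seq_of step n = step (hist step n) n.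
Proof. by rewrite /seq_of /= nth_rcons size_hist ltnn eqxx. Qed.

Definition ratZ (z : Z) : rat := (int_of_Z z)%:~R.

Lemma ratZD x y : ratZ (Z.add x y) = ratZ x + ratZ y.
Proof. by rewrite /ratZ (rmorphD int_of_Z x y : int_of_Z (Z.add x y) = _) rmorphD. Qed.

Lemma ratZM x y : ratZ (Z.mul x y) = ratZ x * ratZ y.
Proof. by rewrite /ratZ (rmorphM int_of_Z x y : int_of_Z (Z.mul x y) = _) rmorphM. Qed.

Lemma ratZN x : ratZ (Z.opp x) = - ratZ x.
Proof. by rewrite /ratZ (rmorphN int_of_Z x : int_of_Z (Z.opp x) = _) rmorphN. Qed.

Lemma ratZ_pos p : ratZ (Zpos p) = (Pos.to_nat p)%:R.
Proof. by []. Qed.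

Lemma ratZ_pos_gt0 p : 0 < ratZ (Zpos p).
Proof. rewrite ratZ_pos ltr0n; lia. Qed.

Lemma ratZ_nat n : ratZ (Z.of_nat n) = n%:R.
Proof. by rewrite /ratZ (_ : Z.of_nat n = Z_of_int (Posz n)) // Z_of_intK. Qed.

Lemma ratZ_ge0 z : Z.le Z0 z -> 0 <= ratZ z.
Proof. by case: z => [|p|p] //= _; rewrite ltW ?ratZ_pos_gt0. Qed.

Lemma ratZ_le x y : Z.le x y -> ratZ x <= ratZ y.
Proof. by move=> le_xy; rewrite -subr_ge0 -ratZN -ratZD ratZ_ge0 //; lia. Qed.

Lemma normr_ratZ z : `|ratZ z| = ratZ (Z.abs z).
Proof.
case: z => [|p|p]; first by rewrite normr0.
  by rewrite gtr0_norm ?ratZ_pos_gt0.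
by rewrite -Pos2Z.opp_pos ratZN normrN gtr0_norm ?ratZ_pos_gt0.
Qed.

Definition ratQ (x : Q) : rat := ratZ (Qnum x) / ratZ (Zpos (Qden x)).

Lemma ratQM x y : ratQ (Qmult x y) = ratQ x * ratQ y.
Proof.
case: x y => [nx dx] [ny dy]; rewrite /ratQ /= Pos2Z.inj_mul.
by rewrite !ratZM invfM mulrACA.
Qed.

Lemma ratQD x y : ratQ (Qplus x y) = ratQ x + ratQ y.
Proof.
case: x y => [nx dx] [ny dy]; rewrite /ratQ /= Pos2Z.inj_mul ratZD !ratZM.
have := ratZ_pos_gt0 dx; have := ratZ_pos_gt0 dy.
by rewrite !lt0r => /andP[dy_neq0 _] /andP[dx_neq0 _]; field; apply/andP.
Qed.

Lemma ratQN x : ratQ (Qopp x) = - ratQ x.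
Proof. by case: x => [n d]; rewrite /ratQ /= ratZN mulNr. Qed.

Lemma ratQV x : ratQ (Qinv x) = (ratQ x)^-1.
Proof.
case: x => [[|p|p] d]; rewrite /ratQ /=; first by rewrite /ratZ /= !mul0r invr0.
  by rewrite invf_div.
by rewrite -!Pos2Z.opp_pos !ratZN invf_div mulNr invrN mulrN.
Qed.

Lemma ratQ_div x y : ratQ (Qdiv x y) = ratQ x / ratQ y.
Proof. by rewrite /Qdiv ratQM ratQV. Qed.

Lemma ratQ_red x : ratQ (Qred x) = ratQ x.
Proof.
case: x (Qred x) (Qred_correct x) => [nx dx] [ny dy]; rewrite /Qeq /ratQ /= => eq_xy.
have := ratZ_pos_gt0 dx; have := ratZ_pos_gt0 dy; rewrite !lt0r => /andP[? _] /andP[? _].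
by apply/eqP; rewrite eqr_div // -!ratZM eq_xy.
Qed.

Lemma ratQ_le {x y : Q} : Qle_bool x y -> ratQ x <= ratQ y.
Proof.
case: x y => [nx dx] [ny dy] /Qle_bool_iff; rewrite /Qle /ratQ /= => le_xy.
rewrite ler_pdivrMr ?ratZ_pos_gt0 // mulrAC ler_pdivlMr ?ratZ_pos_gt0 // -!ratZM.
exact: ratZ_le.
Qed.

Lemma normr_ratQ x : `|ratQ x| = ratQ (Qabs x).
Proof.
case: x => [n d]; rewrite /ratQ /= normrM normfV !normr_ratZ.
by rewrite (Z.abs_eq (Zpos d)).
Qed.

Definition natQ (n : nat) : Q := Qmake (Z.of_nat n) 1.

Lemma ratQ_nat n : ratQ (natQ n) = n%:R.
Proof. by rewrite /ratQ ratZ_nat divr1. Qed.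

Lemma ratQ_pos p n : Pos.to_nat p == n -> ratQ (Qmake (Zpos p) 1) = n%:R.
Proof. by rewrite /ratQ divr1 => /eqP <-. Qed.


Fixpoint histQ (step : seq Q -> nat -> Q) (n : nat) : seq Q :=
  if n is m.+1 then let s := histQ step m in rcons s (step s m) else [::].

Definition seqQ_of (step : seq Q -> nat -> Q) (n : nat) : Q :=
  nth (natQ 0) (histQ step n.+1) n.

Lemma nth_map_ratQ s k : nth 0 (map ratQ s) k = ratQ (nth (natQ 0) s k).
Proof. by elim: s k => [|x s IHs] [|k] //=; rewrite ratQ_nat. Qed.

Lemma seq_of_ratQ step stepQ :
    (forall s n, step (map ratQ s) n = ratQ (stepQ s n)) ->
  forall n, seq_of step n = ratQ (seqQ_of stepQ n).
Proof.
move=> step_ratQ n; rewrite /seq_of /seqQ_of -nth_map_ratQ; congr nth.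
by elim: n.+1 => //= m ->; rewrite step_ratQ map_rcons.
Qed.

(* The intermediate Qred keeps numerators and denominators small under vm_compute. *)
Fixpoint sumQ (m : nat) (G : nat -> Q) : Q :=
  if m is m'.+1 then Qred (Qplus (sumQ m' G) (G m')) else natQ 0.

Lemma ratQ_sum m G : ratQ (sumQ m G) = \sum_(k < m) ratQ (G k).
Proof.
elim: m => [|m IHm]; first by rewrite big_ord0 ratQ_nat.
rewrite -[sumQ _ _]/(Qred (Qplus (sumQ m G) (G m))).
by rewrite ratQ_red ratQD IHm big_ord_recr.
Qed.

Fixpoint powQ (x : Q) (n : nat) : Q :=
  if n is m.+1 then Qred (Qmult x (powQ x m)) else natQ 1.

Lemma ratQ_pow x n : ratQ (powQ x n) = ratQ x ^+ n.
Proof.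
elim: n => [|n IHn]; first by rewrite expr0 ratQ_nat.
rewrite -[powQ _ _]/(Qred (Qmult x (powQ x n))).
by rewrite ratQ_red ratQM IHn exprS.
Qed.

Ltac push_ratQ := rewrite ?(ratQ_red, ratQM, ratQN, ratQ_div, ratQD, ratQ_nat,
  ratQ_sum, ratQ_pow, nth_map_ratQ).

Definition x0Q : Q := Qopp (Qdiv (Qmake 770766 1) (Qmake 323285 1)).

(* The nat literals here are large; [Pos.to_nat p == n] must be decided by
   vm_compute, since ordinary conversion unfolds them in unary. *)
Lemma x0_ratQ : x0 = ratQ x0Q.
Proof.
rewrite ratQN ratQ_div.
have ->: ratQ (Qmake 770766 1) = 770766%:R by apply: ratQ_pos; vm_compute.
have ->: ratQ (Qmake 323285 1) = 323285%:R by apply: ratQ_pos; vm_compute.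
by [].
Qed.

Lemma a2_ratQ : 19949%:R / 321055%:R = ratQ (Qdiv (Qmake 19949 1) (Qmake 321055 1)).
Proof.
rewrite ratQ_div.
have ->: ratQ (Qmake 19949 1) = 19949%:R by apply: ratQ_pos; vm_compute.
have ->: ratQ (Qmake 321055 1) = 321055%:R by apply: ratQ_pos; vm_compute.
by [].
Qed.

Definition aQ_step (s : seq Q) (n : nat) : Q :=
  match n with
  | 0 => Qdiv (Qopp x0Q) (natQ 10)
  | 1 => Qopp (Qdiv (natQ 1) (natQ 6))
  | 2 => Qdiv (Qmake 19949 1) (Qmake 321055 1)
  | 3 => natQ 0
  | _ => Qred (Qmult
           (Qopp (Qdiv (natQ 6) (Qmult (Qplus (natQ n) (natQ 5)) (Qplus (natQ n) (Qopp (natQ 2))))))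
           (sumQ (n - 3) (fun k => Qmult (nth (natQ 0) s k) (nth (natQ 0) s (n - 4 - k)))))
  end%N.

Definition aQ := seqQ_of aQ_step.

Lemma a_ratQ : a =1 (fun k => ratQ (aQ k)).
Proof.
apply: seq_of_ratQ => s [|[|[|[|n]]]]; rewrite /a_step /aQ_step.
- by rewrite ratQ_div ratQN ratQ_nat x0_ratQ.
- by push_ratQ.
- exact: a2_ratQ.
- by rewrite ratQ_nat.
- by push_ratQ; congr (_ * _); apply: eq_bigr => k _; push_ratQ.
Qed.

Definition convQ (s : seq Q) (n : nat) : Q :=
  sumQ (minn (n - 4) 17).+1 (fun k => Qmult (aQ k) (nth (natQ 0) s (n - 4 - k))).

Lemma convQ_ratQ s n :
  \sum_(k < (minn (n - 4) 17).+1) a k * (map ratQ s)`_(n - 4 - k) = ratQ (convQ s n).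
Proof. by rewrite ratQ_sum; apply: eq_bigr => k _; rewrite ratQM nth_map_ratQ a_ratQ. Qed.

Definition AQ_step (s : seq Q) (n : nat) : Q :=
  match n with
  | 0 => natQ 1
  | 1 | 2 | 3 => natQ 0
  | _ => Qred (Qmult
           (Qopp (Qdiv (natQ 12) (Qmult (natQ n) (Qplus (natQ n) (natQ 7))))) (convQ s n))
  end%N.

Definition BQ_step (s : seq Q) (n : nat) : Q :=
  match n with
  | 0 => natQ 1
  | 1 | 2 | 3 | 7 => natQ 0
  | _ => Qred (Qmult
           (Qopp (Qdiv (natQ 12) (Qmult (natQ n) (Qplus (natQ n) (Qopp (natQ 7)))))) (convQ s n))
  end%N.

Definition AQ := seqQ_of AQ_step.
Definition BQ := seqQ_of BQ_step.

Lemma A_ratQ : A =1 (fun n => ratQ (AQ n)).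
Proof.
apply: seq_of_ratQ => s [|[|[|[|n]]]]; rewrite /A_step /AQ_step ?ratQ_nat //.
by rewrite convQ_ratQ; push_ratQ.
Qed.

Lemma B_ratQ : B =1 (fun n => ratQ (BQ n)).
Proof.
apply: seq_of_ratQ => s [|[|[|[|[|[|[|[|n]]]]]]]]; rewrite /B_step /BQ_step ?ratQ_nat //;
  by rewrite convQ_ratQ; push_ratQ.
Qed.

Definition ratioQ : Q := Qdiv (natQ 3) (natQ 4).

Definition geom_boundQ (c : nat) (x : Q) (n : nat) : bool :=
  Qle_bool (Qabs x) (Qmult (Qdiv (natQ c) (natQ 100)) (powQ ratioQ n)).

Lemma geom_boundQ_ratQ c x n : geom_boundQ c x n ->
  `|ratQ x| <= c%:R / 100%:R * (3%:R / 4%:R) ^+ n.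
Proof. by move/ratQ_le; rewrite -normr_ratQ; push_ratQ. Qed.

Lemma AB_small_checked :
  all (fun n => geom_boundQ 21 (AQ n) n && geom_boundQ 85 (BQ n) n) (iota 1 21).
Proof. by vm_compute. Qed.

Lemma a_weighted_sum_checked :
  Qle_bool (sumQ 18 (fun k => Qdiv (Qabs (aQ k)) (powQ ratioQ (k + 4)))) (natQ 3).
Proof. by vm_compute. Qed.

Lemma AB_small n : (1 <= n < 22)%N ->
  `|A n| <= 21%:R / 100%:R * (3%:R / 4%:R) ^+ n /\
  `|B n| <= 85%:R / 100%:R * (3%:R / 4%:R) ^+ n.
Proof.
move=> n_small; have /allP/(_ n) := AB_small_checked.
rewrite mem_iota => /(_ n_small)/andP[/geom_boundQ_ratQ bA /geom_boundQ_ratQ bB].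
by rewrite A_ratQ B_ratQ.
Qed.

Lemma a_weighted_sum_le :
  \sum_(k < 18) `|a k| / (3%:R / 4%:R) ^+ (k + 4) <= 3%:R.
Proof.
have := ratQ_le a_weighted_sum_checked; push_ratQ.
by under eq_bigr => k _ do rewrite ratQ_div -normr_ratQ ratQ_pow ratQ_div !ratQ_nat -a_ratQ.
Qed.


Lemma A_rec n : (22 <= n)%N ->
  A n = - (12%:R / (n%:R * (n%:R + 7%:R))) * \sum_(k < 18) a k * A (n - 4 - k)%N.
Proof.
case: n => [|[|[|[|n]]]] // n_ge; rewrite {1}/A seq_ofE /A_step.
have -> : minn (n.+4 - 4) 17 = 17%N by lia.
by congr (_ * _); apply: eq_bigr => k _; rewrite nth_hist //; have := ltn_ord k; lia.
Qed.

Lemma B_rec n : (22 <= n)%N ->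
  B n = - (12%:R / (n%:R * (n%:R - 7%:R))) * \sum_(k < 18) a k * B (n - 4 - k)%N.
Proof.
case: n => [|[|[|[|[|[|[|[|n]]]]]]]] // n_ge; rewrite {1}/B seq_ofE /B_step.
have -> : minn (n.+4.+4 - 4) 17 = 17%N by lia.
by congr (_ * _); apply: eq_bigr => k _; rewrite nth_hist //; have := ltn_ord k; lia.
Qed.


Theorem lemma6p5 : forall n : nat, (1 <= n)%N ->
  `|A n| <= (21%:R / 100%:R) * (3%:R / 4%:R) ^+ n /\
  `|B n| <= (85%:R / 100%:R) * (3%:R / 4%:R) ^+ n.
Proof.
move=> n n_ge1.
have ratio_gt0 : 0 < 3%:R / 4%:R :> rat by rewrite divr_gt0 ?ltr0n.
have coef_ge0 (c : nat) : 0 <= c%:R / 100%:R :> rat by rewrite divr_ge0.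
split.
- apply: (geometric_decay ratio_gt0 (coef_ge0 21) _ _ a_weighted_sum_le _ A_rec)
    => [//|//|m m_ge|m m_small|//].
    by apply: recurrence_coef_le; rewrite -natrD -natrM ler_nat; nia.
  by have [] := AB_small _ m_small.
- apply: (geometric_decay ratio_gt0 (coef_ge0 85) _ _ a_weighted_sum_le _ B_rec)
    => [//|//|m m_ge|m m_small|//].
    by apply: recurrence_coef_le; rewrite -natrB -?natrM ?ler_nat; nia.
  by have [] := AB_small _ m_small.
Qed.
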